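(* Let $\mathcal{C}$ be a BMZ-collection in sufficiently general position, and let $\psi,\nu$ be rays in $\mathbb{R}^N$ emanating from $0$ that are both generic for $\mathcal{C}$. Then $\deg_\psi(\mathcal{C})=\deg_\nu(\mathcal{C})$.
   Context: Standing notation: $N=(d+1)(r-1)$; $w_1,\ldots,w_r\in\mathbb{R}^{r-1}$ the vertices of a regular $(r-1)$-simplex centered at $0$; $\varphi_i(x)=(x,1)\otimes w_i\in\mathbb{R}^N$ with $u\otimes v=(u_1v_1,\ldots,u_1v_n,u_2v_1,\ldots,u_mv_n)$; $\Phi(\mathcal{P})=\bigcup_i\{\varphi_i(p):p\in P_i\}$ for an $r$-tuple $\mathcal{P}$ of pairwise disjoint finite sets. A BMZ-collection is $\mathcal{C}=(C_1,\ldots,C_{d+2})$, pairwise disjoint finite subsets of $\mathbb{R}^d$, $|C_1|=\cdots=|C_{d+1}|=r-1$, $C_{d+2}=\{z\}$; ground set $C=\{c_1,\ldots,c_{N+1}\}$, $c_{N+1}=z$, $C_k=\{c_{(k-1)(r-1)+1},\ldots,c_{k(r-1)}\}$. Rainbow $r$-partition: $r$-tuple $(R_1,\ldots,R_r)$ of pairwise disjoint subsets of $C$ with $|R_i\cap C_j|\le1$; maximal if it covers $C$. $\mathbf{R}$: maximal rainbow $r$-partitions with $z\in R_r$. $\mathcal{R}-a$: remove $a$ from its class. $F_{\mathcal{R}}=\operatorname{conv}(\Phi(\mathcal{R}-z))$. Sufficiently general position: for all $\mathcal{R}\in\mathbf{R}$, $\Phi(\mathcal{R}-z)$ is affinely independent,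 and for all $\mathcal{R}\in\mathbf{R}$, $a\in C$, $0\notin\operatorname{aff}(\Phi(\mathcal{R}-a))$. A ray $\psi$ from $0$ is generic for $\mathcal{C}$ if it is disjoint from every ridge $\operatorname{conv}(\Phi(\mathcal{R}-z-a))$, $\mathcal{R}\in\mathbf{R}$, $a\in C\setminus\{z\}$. Signs: $\operatorname{gsgn}(\mathcal{R})=\operatorname{sgn}\det M$, where $M$ is the $N\times N$ matrix with row $j$ equal to $\varphi_i(c_j)$ for $c_j\in R_i$, $j\in[N]$. For $k\in[d+1]$, $\pi_k$ is the permutation of $[r]$ with $\pi_k(j)=i$ iff $c_{(k-1)(r-1)+j}\in R_i$ for $j\in[r-1]$, and $\pi_k(r)$ the remaining index; $\operatorname{csgn}(\mathcal{R})=\prod_k\operatorname{sgn}\pi_k$; $\operatorname{sgn}(\mathcal{R})=\operatorname{gsgn}(\mathcal{R})\operatorname{csgn}(\mathcal{R})$. $\deg_\psi(\mathcal{C})=\sum_{\mathcal{R}\in\mathbf{R}:\ \psi\cap F_{\mathcal{R}}\neq\emptyset}\operatorname{sgn}(\mathcal{R})$. *)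

From HB Require Import structures.
From mathcomp Require Import all_boot all_order all_algebra all_fingroup.
From Stdlib Require Import ClassicalEpsilon.
Set Implicit Arguments. Unset Strict Implicit. Unset Printing Implicit Defensive.
Import Order.TTheory GRing.Theory Num.Theory.
Local Open Scope ring_scope.

Definition asb (P : Prop) : bool :=
  if excluded_middle_informative P then true else false.

Definition Ndim (d r : nat) : nat := ((d + 1) * (r - 1))%N.

Section BMZ.
Variable R : rcfType.

Definition dotv n (u v : 'rV[R]_n) : R := \sum_(k < n) u 0 k * v 0 k.

Definition regular_simplex0 (r : nat) (w : 'I_r -> 'rV[R]_(r - 1)) : Prop :=
  \sum_(i < r) w i = 0 /\
  exists a : R, 0 < a /\
    forall i j : 'I_r, i != j -> dotv (w i - w j) (w i - w j) = a.

(* u (x) v = (u_1v_1, ..., u_1v_n, u_2v_1, ..., u_mv_n): entry a*n+b is u_a v_b *)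
Definition kron m n (u : 'rV[R]_m) (v : 'rV[R]_n) : 'rV[R]_(m * n) :=
  \row_(k < m * n) \sum_(a < m) \sum_(b < n)
     (if (nat_of_ord k == a * n + b)%N then u 0 a * v 0 b else 0).

Definition phi (d r : nat) (w : 'I_r -> 'rV[R]_(r - 1)) (i : 'I_r)
  (x : 'rV[R]_d) : 'rV[R]_(Ndim d r) :=
  kron (row_mx x (const_mx 1 : 'rV[R]_1)) (w i).

Definition in_conv (I : finType) n (P : pred I) (p : I -> 'rV[R]_n)
  (x : 'rV[R]_n) : Prop :=
  exists l : I -> R, (forall i, 0 <= l i) /\ \sum_(i | P i) l i = 1 /\
    x = \sum_(i | P i) l i *: p i.

Definition in_aff (I : finType) n (P : pred I) (p : I -> 'rV[R]_n)
  (x : 'rV[R]_n) : Prop :=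
  exists l : I -> R, \sum_(i | P i) l i = 1 /\ x = \sum_(i | P i) l i *: p i.

Definition aff_indep (I : finType) n (P : pred I) (p : I -> 'rV[R]_n) : Prop :=
  forall m : I -> R, \sum_(i | P i) m i = 0 -> \sum_(i | P i) m i *: p i = 0 ->
    forall i, P i -> m i = 0.

(* Ground set C = {c_1,...,c_{N+1}} indexed by 'I_(N+1) (0-based):
   index i < N lies in class C_{i %/ (r-1) + 1}, index N (= ord_max) is z.
   A maximal rainbow r-partition (R_1,...,R_r) is encoded by the function
   f : C -> [r] (0-based) sending each point to its class. *)
Section Coll.
Variables (d r : nat) (w : 'I_r -> 'rV[R]_(r - 1))
          (c : 'I_(Ndim d r).+1 -> 'rV[R]_d).

Local Notation N := (Ndim d r).
Local Notation G := 'I_N.+1.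
Local Notation z := (@ord_max N).

(* R in bold R: maximal rainbow r-partitions with z in R_r *)
Definition inbR (f : {ffun G -> 'I_r}) : bool :=
  (nat_of_ord (f z) == r.-1) &&
  [forall i : G, forall j : G,
     [&& i != j, i != z, j != z & (i %/ (r - 1) == j %/ (r - 1))%N]
       ==> (f i != f j)].

Definition PhiPt (f : {ffun G -> 'I_r}) (i : G) : 'rV[R]_N := phi w (f i) (c i).

Definition gmat (f : {ffun G -> 'I_r}) : 'M[R]_N :=
  \matrix_(i < N, j < N) PhiPt f (widen_ord (leqnSn N) i) 0 j.
Definition gsgn (f : {ffun G -> 'I_r}) : int := sgz (\det (gmat f)).

Definition pik (f : {ffun G -> 'I_r}) (k : 'I_(d + 1)) : option {perm 'I_r} :=
  [pick s : {perm 'I_r} |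
     [forall j : 'I_r, (j < r - 1)%N ==> (s j == f (inord (k * (r - 1) + j)))]].

Definition csgn (f : {ffun G -> 'I_r}) : int :=
  \prod_(k < d + 1)
     (if pik f k is Some s then (-1) ^+ odd_perm s else 1).

Definition sgnR (f : {ffun G -> 'I_r}) : int := gsgn f * csgn f.

Definition ray_meets_F (v : 'rV[R]_N) (f : {ffun G -> 'I_r}) : Prop :=
  exists t : R, 0 <= t /\ in_conv (fun i : G => i != z) (PhiPt f) (t *: v).

Definition generic_ray (v : 'rV[R]_N) : Prop :=
  forall f : {ffun G -> 'I_r}, inbR f -> forall a : G, a != z ->
    forall t : R, 0 <= t ->
      ~ in_conv (fun i : G => (i != z) && (i != a)) (PhiPt f) (t *: v).

Definition suff_general_position : Prop :=
  (forall f : {ffun G -> 'I_r}, inbR f ->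
     aff_indep (fun i : G => i != z) (PhiPt f)) /\
  (forall f : {ffun G -> 'I_r}, inbR f -> forall a : G,
     ~ in_aff (fun i : G => i != a) (PhiPt f) 0).

Definition degC (v : 'rV[R]_N) : int :=
  \sum_(f : {ffun G -> 'I_r} | inbR f && asb (ray_meets_F v f)) sgnR f.

End Coll.
End BMZ.

(* Since Phi(R - z) is a basis of R^N for every cell R (a maximal rainbow
   partition with z in R_r), each v has coordinates [bary R v = v M_R^-1] in
   it, and the ray through v meets F_R iff all of them are nonnegative; thus
   deg_v is the signed number of cells in which v has nonnegative coordinates.
   Move v along the segment from psi to an auxiliary point u chosen off
   finitely many hyperplanes.  The count can only change where a coordinate j
   of a cell R changes sign, i.e. where v crosses the facet of F_R opposite to
   the vertex of c_j.  That facet is also a facet of exactly one other cell R',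
   obtained by giving c_j the colour missing from its class.  The coordinates
   of R and R' agree on the facet, their j-th coordinates differ by the factor
   det M_R / det M_R' (Cramer's rule), and sgn R' = - sgz (det M_R / det M_R')
   sgn R because the recolouring composes one pi_k with a transposition.  So
   the contributions of R and R' change by opposite amounts and the count is
   constant; genericity of psi and u handles the endpoints.  Hence deg_psi and
   deg_nu both equal the signed count at u. *)

From HB Require Import structures.
From mathcomp Require Import all_boot all_order all_algebra all_fingroup.
From mathcomp Require Import zify ring lra.
From Stdlib Require Import ClassicalEpsilon.
Set Implicit Arguments. Unset Strict Implicit. Unset Printing Implicit Defensive.
Import Order.TTheory GRing.Theory Num.Theory.
Local Open Scope ring_scope.

Lemma sum_odd_involution (T : finType) (V : numDomainType) (P : pred T)
    (s : T -> T) (F : T -> V) :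
  involutive s -> (forall x, P (s x) = P x) ->
  (forall x, P x -> F (s x) = - F x) -> \sum_(x | P x) F x = 0.
Proof.
move=> sK Ps Fs; set S := \sum_(x | P x) F x.
have SN : S = - S.
  rewrite /S [LHS](reindex_inj (inv_inj sK)) /= -sumrN.
  by apply: eq_big => [x | x]; rewrite Ps // => /Fs.
by apply/eqP; move/eqP: SN; rewrite -subr_eq0 opprK -mulr2n mulrn_eq0.
Qed.

Lemma count_sub_lt (T : eqType) (a1 a2 : pred T) (x : T) (s : seq T) :
  (forall y, a1 y -> a2 y) -> x \in s -> a2 x -> ~~ a1 x -> (count a1 s < count a2 s)%N.
Proof.
move=> a12; elim: s => [|y s IHs] //=; rewrite in_cons => /predU1P [<- | xs] a2x a1x.
  by rewrite a2x (negbTE a1x) add0n add1n ltnS sub_count.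
rewrite -addnS leq_add ?IHs //; case: (boolP (a1 y)) => [/a12 -> | ] //.
Qed.

Section Gaps.
Variables (disp : Order.disp_t) (T : porderType disp).
Local Open Scope order_scope.

Lemma gap_below (E : seq T) a e0 : a < e0 ->
  exists b, [/\ a <= b, b < e0 & forall e, e \in E -> ~~ (b < e < e0)].
Proof.
move=> ae; elim: E => [|x E [b [ab be nogap]]]; first by exists a; rewrite lexx.
have [/andP [bx xe] | nx] := boolP (b < x < e0).
  exists x; split=> //; first by rewrite (le_trans ab) ?ltW.
  move=> e; rewrite in_cons => /predU1P [-> | eE]; first by rewrite ltxx.
  by apply: contra (nogap e eE) => /andP [xe' ->]; rewrite (lt_trans bx xe').
by exists b; split=> // e; rewrite in_cons => /predU1P [-> | /nogap].
Qed.

Lemma gap_above (E : seq T) e0 a : e0 < a ->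
  exists b, [/\ e0 < b, b <= a & forall e, e \in E -> ~~ (e0 < e < b)].
Proof.
move=> ea; elim: E => [|x E [b [eb ba nogap]]]; first by exists a; rewrite lexx.
have [/andP [ex xb] | nx] := boolP (e0 < x < b).
  exists x; split=> //; first by rewrite (le_trans (ltW xb)).
  move=> e; rewrite in_cons => /predU1P [-> | eE]; first by rewrite ltxx andbF.
  by apply: contra (nogap e eE) => /andP [-> ex']; rewrite (lt_trans ex' xb).
by exists b; split=> // e; rewrite in_cons => /predU1P [-> | /nogap].
Qed.
End Gaps.

(* Cells [f] have affine coordinates [A f j + s * B f j] along a parameter s,
   and [sw f j] is the cell on the other side of the wall where coordinate j
   of [f] vanishes. *)
Section WallCrossing.
Variables (R : realFieldType) (F : finType) (n : nat).
Variables (P : pred F) (sg : F -> int) (A B : F -> 'I_n -> R).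

Definition cell_coord f j (s : R) := A f j + s * B f j.
Definition covers f s := [forall j, 0 <= cell_coord f j s].
Definition signed_count s : int := \sum_(f | P f && covers f s) sg f.

Definition wall s := exists f j, [/\ P f, B f j != 0 & cell_coord f j s = 0].
Definition off_boundary s :=
  forall f j, P f -> B f j != 0 -> cell_coord f j s = 0 -> exists k, cell_coord f k s < 0.
Definition between (x y s : R) := (s - x) * (s - y) < 0.

Lemma betweenC x y s : between x y s = between y x s.
Proof. by rewrite /between mulrC. Qed.

Lemma between_lt x y s : x < y -> between x y s -> x < s < y.
Proof. by rewrite /between => xy xys; apply/andP; split; nra. Qed.

Lemma cell_coord_root f j z : cell_coord f j z = 0 ->
  forall s, cell_coord f j s = (s - z) * B f j.
Proof. by move=> root s; rewrite -[LHS]subr0 -root /cell_coord; ring. Qed.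

Lemma cell_coord_const f j : B f j = 0 -> forall x y, cell_coord f j x = cell_coord f j y.
Proof. by rewrite /cell_coord => -> x y; rewrite !mulr0. Qed.

Lemma cell_coord_sign_change f j x y : cell_coord f j x * cell_coord f j y < 0 ->
  exists s, [/\ between x y s, B f j != 0 & cell_coord f j s = 0].
Proof.
move=> xy; have B0 : B f j != 0.
  by apply: contraTneq xy => /cell_coord_const/(_ y x) ->; rewrite -expr2 le_gtF ?sqr_ge0.
have root : cell_coord f j (- A f j / B f j) = 0 by rewrite /cell_coord divfK // addrN.
exists (- A f j / B f j); split => //; move: xy; rewrite !(cell_coord_root root).
have B2 : 0 < B f j ^+ 2 by rewrite lt0r sqrf_eq0 B0 sqr_ge0.
by rewrite /between mulrACA -expr2 pmulr_llt0 // => xy; nra.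
Qed.

Lemma covers_stable x y f : off_boundary x -> (forall s, between x y s -> ~ wall s) ->
  P f -> covers f x -> covers f y.
Proof.
move=> offx nowall Pf /forallP cx; apply/forallP => j.
have [B0 | B0] := eqVneq (B f j) 0; first by rewrite (cell_coord_const B0 y x).
have pos_x : 0 < cell_coord f j x.
  rewrite lt_def cx andbT; apply/eqP => /(offx f j Pf B0) [k].
  by rewrite ltNge cx.
rewrite leNgt; apply/negP => neg_y.
have [s [xys _ root]] : exists s, [/\ between x y s, B f j != 0 & cell_coord f j s = 0].
  by apply: cell_coord_sign_change; rewrite pmulr_rlt0.
by apply: (nowall s xys); exists f, j.
Qed.

Lemma signed_count_const x y : off_boundary x -> off_boundary y ->
  (forall s, between x y s -> ~ wall s) -> signed_count x = signed_count y.
Proof.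
move=> offx offy nowall; apply: eq_bigl => f; case Pf: (P f) => //=.
apply/idP/idP; first exact: covers_stable.
by apply: covers_stable => // s; rewrite betweenC; apply: nowall.
Qed.

Lemma cell_coord_sign_stable f j x y : ~ wall x -> (forall s, between x y s -> ~ wall s) ->
  P f -> cell_coord f j y != 0 -> (0 <= cell_coord f j x) = (0 < cell_coord f j y).
Proof.
move=> nowall_x nowall_xy Pf cy; have [B0 | B0] := eqVneq (B f j) 0.
  by rewrite (cell_coord_const B0 x y) le0r (negbTE cy).
have cx : cell_coord f j x != 0.
  by apply/eqP => cx; apply: nowall_x; exists f, j.
have xy : 0 < cell_coord f j x * cell_coord f j y.
  rewrite lt_def mulf_neq0 //= leNgt; apply/negP.
  by move=> /cell_coord_sign_change [s [xys _ root]]; apply: (nowall_xy s xys); exists f, j.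
by rewrite le0r (negbTE cx); apply/idP/idP => h; nra.
Qed.

Variable sw : F -> 'I_n -> F.
Hypothesis sw_P : forall f j, P f -> P (sw f j).
Hypothesis swK : forall f j, P f -> sw (sw f j) j = f.
Hypothesis coord_sw_wall : forall f j s, P f -> cell_coord f j s = 0 ->
  forall k, cell_coord (sw f j) k s = cell_coord f k s.
Hypothesis coord_sw_scale : forall f j, P f -> exists rho, [/\ rho != 0,
  forall s, cell_coord (sw f j) j s = rho * cell_coord f j s & sg (sw f j) = - sgz rho * sg f].

Section Crossing.
Variables p z q : R.
Hypotheses (pz : p < z) (zq : z < q) (nowall_p : ~ wall p) (nowall_q : ~ wall q).
Hypothesis nowall_pq : forall s, p < s < q -> s != z -> ~ wall s.
Hypothesis simple_wall :
  forall f j k, P f -> cell_coord f j z = 0 -> cell_coord f k z = 0 -> j = k.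

Lemma nowall_near_p s : between p z s -> ~ wall s.
Proof.
move=> /(between_lt pz)/andP [ps sz]; apply: nowall_pq; last by rewrite lt_eqF.
by rewrite ps (lt_trans sz zq).
Qed.

Lemma nowall_near_q s : between q z s -> ~ wall s.
Proof.
rewrite betweenC => /(between_lt zq)/andP [zs sq]; apply: nowall_pq; last by rewrite gt_eqF.
by rewrite sq (lt_trans pz zs).
Qed.

Definition wall_index f := [pick j | cell_coord f j z == 0].
Definition flip f := if P f then (if wall_index f is Some j then sw f j else f) else f.
Definition jump f : int := ((covers f p)%:R - (covers f q)%:R) * sg f.

Lemma flip_sw f j : P f -> cell_coord f j z = 0 -> flip f = sw f j.
Proof.
move=> Pf cj; rewrite /flip Pf /wall_index; case: pickP => [k /eqP ck | /(_ j)].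
  by rewrite (simple_wall Pf ck cj).
by rewrite cj eqxx.
Qed.

Lemma flip_id f : (forall j, cell_coord f j z != 0) -> flip f = f.
Proof.
move=> cz; rewrite /flip /wall_index; case: (P f) => //.
by case: pickP => // k; rewrite (negbTE (cz k)).
Qed.

Lemma flipK : involutive flip.
Proof.
move=> f; case Pf: (P f); last by rewrite /flip Pf Pf.
case: (pickP (fun j => cell_coord f j z == 0)) => [j /eqP cj | cz].
  have cj' : cell_coord (sw f j) j z = 0 by rewrite coord_sw_wall.
  by rewrite (flip_sw Pf cj) (flip_sw (sw_P j Pf) cj') swK.
have ff : flip f = f by apply: flip_id => j; rewrite cz.
by rewrite !ff.
Qed.

Lemma P_flip f : P (flip f) = P f.
Proof.
case Pf: (P f); last by rewrite /flip Pf Pf.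
case: (pickP (fun j => cell_coord f j z == 0)) => [j /eqP cj | cz].
  by rewrite (flip_sw Pf cj) sw_P.
by rewrite flip_id // => j; rewrite cz.
Qed.

Lemma jump_id f : P f -> (forall j, cell_coord f j z != 0) -> jump f = 0.
Proof.
move=> Pf cz; rewrite /jump; suff -> : covers f p = covers f q by rewrite subrr mul0r.
apply: eq_forallb => j.
by rewrite (cell_coord_sign_stable nowall_p nowall_near_p) //
  (cell_coord_sign_stable nowall_q nowall_near_q).
Qed.

Lemma covers_near_wall g j x : ~ wall x -> (forall s, between x z s -> ~ wall s) ->
  P g -> cell_coord g j z = 0 ->
  covers g x = [forall k, (k != j) ==> (0 < cell_coord g k z)] && (0 <= cell_coord g j x).
Proof.
move=> nowall_x nowall_xz Pg cj.
have other k : k != j -> (0 <= cell_coord g k x) = (0 < cell_coord g k z).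
  move=> kj; apply: cell_coord_sign_stable => //.
  by apply: contra_neq kj => ck; apply: simple_wall Pg ck cj.
apply/forallP/andP => [cx | [/forallP co cjx] k].
  by split=> //; apply/forallP => k; apply/implyP => kj; rewrite -other.
by have [-> // | kj] := eqVneq k j; rewrite other //; apply: implyP (co k) kj.
Qed.

Lemma sign_jump (b : R) :
  ((0 <= (p - z) * b)%R%:R - (0 <= (q - z) * b)%R%:R : int) = - sgz b.
Proof.
have pz' : p - z < 0 by rewrite subr_lt0.
have qz' : 0 < q - z by rewrite subr_gt0.
rewrite (nmulr_rge0 _ pz') (pmulr_rge0 _ qz').
by case: (ltgtP b 0) => [hb | hb | ->]; [rewrite ltr0_sgz | rewrite gtr0_sgz | rewrite sgz0].
Qed.

Lemma jump_sw f j : P f -> cell_coord f j z = 0 -> jump (sw f j) = - jump f.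
Proof.
move=> Pf cj; have Pf' := sw_P j Pf.
have [rho [rho0 coord_rho sg_rho]] := coord_sw_scale j Pf.
have cj' : cell_coord (sw f j) j z = 0 by rewrite coord_sw_wall.
have same_others : [forall k, (k != j) ==> (0 < cell_coord (sw f j) k z)] =
    [forall k, (k != j) ==> (0 < cell_coord f k z)].
  by apply: eq_forallb => k; rewrite coord_sw_wall.
rewrite /jump (covers_near_wall nowall_p nowall_near_p Pf cj).
rewrite (covers_near_wall nowall_p nowall_near_p Pf' cj').
rewrite (covers_near_wall nowall_q nowall_near_q Pf cj).
rewrite (covers_near_wall nowall_q nowall_near_q Pf' cj') same_others sg_rho.
rewrite !coord_rho !(cell_coord_root cj) ![rho * _]mulrCA.
case: [forall k, _] => /=; last by rewrite subrr !mul0r oppr0.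
rewrite !sign_jump sgzM.
case: (ltgtP rho 0) => [/ltr0_sgz -> | /gtr0_sgz -> | r0]; try ring.
by rewrite r0 eqxx in rho0.
Qed.

Lemma jump_flip f : P f -> jump (flip f) = - jump f.
Proof.
move=> Pf; case: (pickP (fun j => cell_coord f j z == 0)) => [j /eqP cj | cz].
  by rewrite (flip_sw Pf cj) jump_sw.
by rewrite flip_id ?jump_id ?oppr0 // => j; rewrite cz.
Qed.

Lemma signed_count_cross : signed_count p = signed_count q.
Proof.
apply/eqP; rewrite -subr_eq0; apply/eqP.
have -> : signed_count p - signed_count q = \sum_(f | P f) jump f.
  rewrite /signed_count !big_mkcondr -sumrB /=; apply: eq_bigr => f _.
  rewrite /jump; case: (covers f p); case: (covers f q) => /=;
  by rewrite ?subrr ?mul0r ?subr0 ?sub0r ?mul1r ?mulN1r.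
exact: sum_odd_involution flipK P_flip jump_flip.
Qed.
End Crossing.

Definition walls : seq R := [seq - A x.1 x.2 / B x.1 x.2 |
  x <- enum [pred x : F * 'I_n | P x.1 && (B x.1 x.2 != 0)]].

Lemma wall_in_walls s : wall s -> s \in walls.
Proof.
move=> [f [j [Pf B0 root]]]; apply/mapP; exists (f, j); first by rewrite mem_enum inE /= Pf B0.
apply/(mulIf B0)/eqP; rewrite divfK //= -addr_eq0 addrC; exact/eqP.
Qed.

Lemma nowall_off_boundary s : ~ wall s -> off_boundary s.
Proof. by move=> nowall f j Pf B0 root; case: nowall; exists f, j. Qed.

Hypothesis simple_walls : forall s f j k, 0 < s < 1 -> P f ->
  cell_coord f j s = 0 -> cell_coord f k s = 0 -> j = k.

Lemma crossing_step a b e0 : 0 <= a -> b <= 1 -> a < e0 < b ->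
  exists p q, [/\ a < p < e0, e0 < q < b, ~ wall p, ~ wall q &
                  signed_count p = signed_count q].
Proof.
move=> a0 b1 /andP [ae be]; have [a' [aa' ae' gap_a]] := gap_below walls ae.
have [b' [eb' bb' gap_b]] := gap_above walls be.
have [a'p pe] := midf_lt ae'; have [eq qb'] := midf_lt eb'.
set p := (a' + e0) / 2 in a'p pe *; set q := (e0 + b') / 2 in eq qb' *.
have nowall_p : ~ wall p by move/wall_in_walls/gap_a; rewrite a'p pe.
have nowall_q : ~ wall q by move/wall_in_walls/gap_b; rewrite eq qb'.
exists p, q; split=> //; rewrite ?(le_lt_trans aa' a'p) ?(lt_le_trans qb' bb') ?andbT //.
apply: (signed_count_cross (z := e0)) => // [s /andP [ps sq] se /wall_in_walls | f j k Pf].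
  case: (ltgtP s e0) se => // [se | es] _ /[dup] /gap_a + /gap_b.
    by rewrite (lt_trans a'p ps) se.
  by rewrite es (lt_trans sq qb').
by apply: simple_walls => //; rewrite (le_lt_trans a0 ae) (lt_le_trans be b1).
Qed.

Lemma signed_count_no_walls a b : a < b -> off_boundary a -> off_boundary b ->
  ~~ has (fun e => a < e < b) walls -> signed_count a = signed_count b.
Proof.
move=> ab off_a off_b /hasPn nowalls; apply: signed_count_const => // s.
by move=> /(between_lt ab) sab /wall_in_walls /nowalls; rewrite sab.
Qed.

Lemma count_walls_shrink a b a' b' e0 : a <= a' -> b' <= b -> e0 \in walls ->
  a < e0 < b -> ~~ (a' < e0 < b') ->
  (count (fun e => (a' < e < b')%R) walls < count (fun e => (a < e < b)%R) walls)%N.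
Proof.
move=> aa' b'b e0w e0ab e0ab'; apply: count_sub_lt e0w e0ab e0ab' => e /andP [a'e eb'].
by rewrite (le_lt_trans aa' a'e) (lt_le_trans eb' b'b).
Qed.

Lemma signed_count_interval m a b : 0 <= a -> a < b -> b <= 1 ->
  off_boundary a -> off_boundary b ->
  (count (fun e => (a < e < b)%R) walls <= m)%N -> signed_count a = signed_count b.
Proof.
elim: m a b => [|m IHm] a b a0 ab b1 off_a off_b cnt.
  by apply: signed_count_no_walls => //; rewrite has_count -leqNgt.
have [/hasP [e0 e0w e0ab] | ] := boolP (has (fun e => a < e < b) walls); last first.
  exact: signed_count_no_walls.
have [p [q [/andP [ap pe] /andP [eq qb] nowall_p nowall_q cross]]] := crossing_step a0 b1 e0ab.
have /andP [ae0 e0b] := e0ab.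
have off_p := nowall_off_boundary nowall_p; have off_q := nowall_off_boundary nowall_q.
rewrite (IHm a p) ?cross ?(IHm q b) //.
- by rewrite ltW // (le_lt_trans a0) // (lt_trans ae0).
- rewrite -ltnS; apply: leq_trans cnt; apply: (count_walls_shrink _ _ e0w e0ab) => //.
    exact/ltW/(lt_trans ae0).
  by rewrite lt_gtF.
- by rewrite ltW // (lt_le_trans _ b1) // (lt_trans pe).
- rewrite -ltnS; apply: leq_trans cnt; apply: (count_walls_shrink _ _ e0w e0ab) => //.
    exact/ltW/(lt_trans pe).
  by rewrite (lt_gtF pe) andbF.
Qed.

Lemma signed_count_segment : off_boundary 0 -> off_boundary 1 ->
  signed_count 0 = signed_count 1.
Proof.
move=> off0 off1; apply: (signed_count_interval (m := size walls));
  by rewrite ?ltr01 ?count_size.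
Qed.
End WallCrossing.

Lemma mul_powers_col (R : comNzRingType) n (b : 'cV[R]_n) (t : R) :
  (\row_(k < n) t ^+ k *m b) 0 0 = (rVpoly b^T).[t].
Proof.
rewrite mxE horner_poly; apply: eq_bigr => k _.
rewrite !mxE insubT // => kn; rewrite mxE mulrC; congr (b _ 0 * _); exact: val_inj.
Qed.

Lemma exists_row_avoiding (R : numDomainType) n (I : finType) (b : I -> 'cV[R]_n) :
  exists u : 'rV[R]_n, forall i, b i != 0 -> (u *m b i) 0 0 != 0.
Proof.
(* On the moment curve u = (1, t, t^2, ...) every condition becomes a nonzero
   polynomial in t, and their product has a non-root among 0, 1, 2, ... *)
pose Q := \prod_(i | b i != 0) rVpoly (b i)^T.
have Q0 : Q != 0.
  apply/prodf_neq0 => i b0.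
  apply: contra_neq b0 => /(congr1 (@poly_rV _ n)); rewrite rVpolyK linear0.
  by move/(congr1 trmx); rewrite trmxK trmx0.
pose ts : seq R := [seq i%:R | i <- iota 0 (size Q)].
have uniq_ts : uniq ts.
  by rewrite map_inj_uniq ?iota_uniq // => i j /eqP; rewrite eqr_nat => /eqP.
have [t _ Qt] : exists2 t, t \in ts & ~~ root Q t.
  apply/allPn/negP => /(max_poly_roots Q0)/(_ uniq_ts).
  by rewrite size_map size_iota ltnn.
exists (\row_(k < n) t ^+ k) => i b0; rewrite mul_powers_col.
by move: Qt; rewrite /root /Q horner_prod => /prodf_neq0; apply.
Qed.

Section Cramer.
Variables (F : fieldType) (n : nat).

Definition row_subst (A : 'M[F]_n) j (x : 'rV[F]_n) : 'M[F]_n :=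
  \matrix_(i, k) if i == j then x 0 k else A i k.

Lemma row_subst_eq (A B : 'M[F]_n) j x : (forall i, i != j -> row i A = row i B) ->
  row_subst A j x = row_subst B j x.
Proof.
move=> AB; apply/matrixP => i k; rewrite !mxE; case: eqVneq => // ij.
by have /rowP/(_ k) := AB i ij; rewrite !mxE.
Qed.

Lemma cramer_row (A : 'M[F]_n) j x : A \in unitmx ->
  (x *m invmx A) 0 j * \det A = \det (row_subst A j x).
Proof.
move=> Au; rewrite /invmx Au -scalemxAr mxE mulrAC mulVf -?unitfE -?unitmxE // mul1r.
rewrite (expand_det_row _ j) mxE; apply: eq_bigr => i _.
rewrite !mxE eqxx; congr (_ * (_ * \det _)); apply/matrixP => a b.
by rewrite !mxE eq_sym (negbTE (neq_lift _ _)).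
Qed.
End Cramer.

Section Rainbow.
Local Close Scope ring_scope.
Variables d r : nat.
Local Notation N := (Ndim d r).
Local Notation G := 'I_N.+1.
Local Notation z := (@ord_max N).
Local Notation K := (r - 1).
Local Notation wid := (widen_ord (leqnSn N)).
Local Notation coloring := {ffun G -> 'I_r}.
Implicit Types (f : coloring) (j : 'I_N).

Definition class_pt (k t : nat) : G := inord (k * K + t).

Lemma class_pt_lt k t : k < d + 1 -> t < K -> k * K + t < N.
Proof.
move=> hk ht; apply: leq_trans (_ : k * K + K <= N); first by rewrite ltn_add2l.
by rewrite /Ndim -mulSnr leq_mul2r hk orbT.
Qed.

Lemma class_ptE k t : k < d + 1 -> t < K -> class_pt k t = k * K + t :> nat.
Proof. by move=> hk ht; rewrite /class_pt inordK // ltnS ltnW // class_pt_lt. Qed.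

Lemma class_pt_neq_apex k t : k < d + 1 -> t < K -> class_pt k t != z.
Proof.
by move=> hk ht; rewrite -(inj_eq val_inj) /= class_ptE // neq_ltn class_pt_lt.
Qed.

Lemma class_of_pt k t : t < K -> (k * K + t) %/ K = k.
Proof. by move=> ht; rewrite divnMDl ?divn_small ?addn0 // (leq_ltn_trans _ ht). Qed.

Lemma nonapex_class_pt (i : G) : i != z ->
  [/\ i %/ K < d + 1, i %% K < K & i = class_pt (i %/ K) (i %% K)].
Proof.
move=> iz; have iN : i < N.
  by rewrite ltn_neqAle -ltnS ltn_ord andbT; move: iz; rewrite -(inj_eq val_inj).
have K0 : 0 < K.
  by move: (leq_ltn_trans (leq0n i) iN); rewrite /Ndim muln_gt0 => /andP [].
have hk : i %/ K < d + 1 by rewrite ltn_divLR // mulnC.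
have ht : i %% K < K by rewrite ltn_pmod.
by split=> //; apply: val_inj; rewrite /= class_ptE // -divn_eq.
Qed.

Lemma widen_neq_apex (j : 'I_N) : wid j != z.
Proof. by rewrite -(inj_eq val_inj) /= neq_ltn ltn_ord. Qed.

Lemma inbR_rainbow f (i j : G) : inbR f -> i != j -> i != z -> j != z ->
  i %/ K = j %/ K -> f i != f j.
Proof.
case/andP=> _ /forallP/(_ i)/forallP/(_ j)/implyP rainbow_ij ij iz jz /eqP ck.
by apply: rainbow_ij; rewrite ij iz jz.
Qed.

Lemma inbR_class_inj f k x y : inbR f -> k < d + 1 -> x < K -> y < K ->
  f (class_pt k x) = f (class_pt k y) -> x = y.
Proof.
move=> Hf hk hx hy fxy; apply/eqP; apply: contraTT (introT eqP fxy) => xy.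
apply: inbR_rainbow; rewrite ?class_pt_neq_apex ?class_ptE ?class_of_pt //.
by apply: contra xy => /eqP/(congr1 val); rewrite /= !class_ptE // => /addnI ->.
Qed.

Lemma K_lt_r (m : 'I_r) : K < r.
Proof. by have := ltn_ord m; lia. Qed.

Lemma ord_ge_K (x : 'I_r) : K <= x -> nat_of_ord x = K.
Proof. by move=> Kx; have := ltn_ord x; lia. Qed.

Lemma class_perm f k : inbR f -> k < d + 1 ->
  exists s : {perm 'I_r}, forall x : 'I_r, x < K -> s x = f (class_pt k x).
Proof.
move=> Hf hk; have [m0 m0_free] : exists m0, forall t, t < K -> f (class_pt k t) != m0.
  have : ~~ ([set: 'I_r] \subset [set f (class_pt k t) | t : 'I_K]).
    apply/negP => /subset_leq_card; rewrite cardsT card_ord => le_rK.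
    have := leq_trans le_rK (leq_imset_card _ _); rewrite card_ord.
    by have := K_lt_r (f z); lia.
  case/subsetPn => m0 _ m0S; exists m0 => t ht; apply: contraNneq m0S => <-.
  by apply/imsetP; exists (Ordinal ht).
pose g (x : 'I_r) : 'I_r := if x < K then f (class_pt k x) else m0.
have g_inj : injective g.
  move=> x y; rewrite /g; case: ifPn => hx; case: ifPn => hy.
  - by move/(inbR_class_inj Hf hk hx hy)/val_inj.
  - by move=> fx; case/eqP: (m0_free _ hx).
  - by move=> fy; case/eqP: (m0_free _ hy); rewrite -fy.
  - by move=> _; apply: val_inj; move: hx hy; rewrite /= -!leqNgt => /ord_ge_K -> /ord_ge_K ->.
by exists (perm g_inj) => x hx; rewrite permE /g hx.
Qed.

Definition free_color f k (m : 'I_r) :=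
  [forall i : G, ((i != z) && (i %/ K == k)) ==> (f i != m)].

Lemma free_colorP f k (s : {perm 'I_r}) m : k < d + 1 ->
  (forall x : 'I_r, x < K -> s x = f (class_pt k x)) ->
  free_color f k m = (K <= (s^-1)%g m).
Proof.
move=> hk Hs; apply/forallP/idP => [free | le_K i].
  rewrite leqNgt; apply/negP => lt_K.
  have := free (class_pt k ((s^-1)%g m)); rewrite class_pt_neq_apex // class_ptE //.
  by rewrite class_of_pt // eqxx -Hs // permKV eqxx.
apply/implyP => /andP [iz /eqP ik]; have [_ ht Ei] := nonapex_class_pt iz.
have -> : f i = s (Ordinal (ltn_trans ht (K_lt_r m))) by rewrite Hs //= -ik -Ei.
by apply: contraTneq le_K => <-; rewrite permK -ltnNge.
Qed.

Lemma free_color_unique f k m m' : inbR f -> k < d + 1 ->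
  free_color f k m -> free_color f k m' -> m = m'.
Proof.
move=> Hf hk; have [s Hs] := class_perm Hf hk; rewrite !(free_colorP _ hk Hs).
move=> /ord_ge_K Km /ord_ge_K Km'.
by apply/(perm_inj (s := (s^-1)%g))/val_inj; rewrite /= Km Km'.
Qed.

(* The cell sharing with [f] the facet opposite to the point [wid j]. *)
Definition recolor f (j : 'I_N) : coloring :=
  if [pick m | free_color f (j %/ K) m] is Some m
  then [ffun i => if i == wid j then m else f i] else f.

Lemma recolor_spec f (j : 'I_N) : inbR f -> exists m, free_color f (j %/ K) m /\
  recolor f j = [ffun i => if i == wid j then m else f i].
Proof.
move=> Hf; rewrite /recolor; case: pickP => [m free | no_free]; first by exists m.
have [hk _ _] := nonapex_class_pt (widen_neq_apex j).
have [s Hs] := class_perm Hf hk.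
have := no_free (s (Ordinal (K_lt_r (f z)))); rewrite (free_colorP _ hk Hs) permK /=.
by rewrite leqnn.
Qed.

Lemma free_color_class f k m i : free_color f k m -> i != z -> i %/ K = k -> f i != m.
Proof. by move=> /forallP/(_ i)/implyP free iz ik; apply: free; rewrite iz ik eqxx. Qed.

Lemma recolor_other f j i : inbR f -> i != wid j -> recolor f j i = f i.
Proof. by move=> Hf ij; have [m [_ ->]] := recolor_spec j Hf; rewrite ffunE (negbTE ij). Qed.

Lemma recolor_free f j : inbR f -> free_color f (j %/ K) (recolor f j (wid j)).
Proof. by move=> Hf; have [m [free ->]] := recolor_spec j Hf; rewrite ffunE eqxx. Qed.

Lemma recolor_inbR f j : inbR f -> inbR (recolor f j).
Proof.
move=> Hf; have free := recolor_free j Hf; have [m [_ Ef]] := recolor_spec j Hf.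
rewrite Ef ffunE eqxx in free; rewrite Ef.
have zj : (z == wid j) = false by rewrite eq_sym (negbTE (widen_neq_apex j)).
apply/andP; split; first by rewrite ffunE zj; case/andP: Hf.
apply/forallP => a; apply/forallP => b; apply/implyP => /and4P [ab az bz /eqP ab_cl].
rewrite !ffunE; have [aj | aj] := eqVneq a (wid j); have [bj | bj] := eqVneq b (wid j).
- by rewrite aj bj eqxx in ab.
- by rewrite eq_sym; apply: free_color_class free bz _; rewrite -ab_cl aj.
- by apply: free_color_class free az _; rewrite ab_cl bj.
- exact: inbR_rainbow.
Qed.

Lemma recolorK f j : inbR f -> recolor (recolor f j) j = f.
Proof.
move=> Hf; have Hf' := recolor_inbR j Hf.
have [hk _ _] := nonapex_class_pt (widen_neq_apex j).
have [m' [free' ->]] := recolor_spec j Hf'.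
have free_old : free_color (recolor f j) (j %/ K) (f (wid j)).
  apply/forallP => i; apply/implyP => /andP [iz /eqP ik].
  have [-> | ij] := eqVneq i (wid j).
    by rewrite eq_sym; apply: free_color_class (recolor_free j Hf) (widen_neq_apex j) _.
  by rewrite recolor_other //; apply: inbR_rainbow; rewrite ?widen_neq_apex.
rewrite (free_color_unique Hf' hk free' free_old); apply/ffunP => i; rewrite ffunE.
by case: eqVneq => [-> // | ij]; rewrite recolor_other.
Qed.

Lemma perm_eq_below (p q : {perm 'I_r}) :
  (forall x : 'I_r, x < K -> p x = q x) -> p = q.
Proof.
move=> pq; apply/permP => x; have [/pq // | Kx] := ltnP x K.
have Ky : (K <= (q^-1)%g (p x)).
  rewrite leqNgt; apply/negP => lt_K; move: (pq _ lt_K); rewrite permKV => /perm_inj yx.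
  by move: Kx; rewrite -yx leqNgt lt_K.
have : (q^-1)%g (p x) = x by apply/val_inj; rewrite /= (ord_ge_K Ky) (ord_ge_K Kx).
by move/(congr1 q); rewrite permKV.
Qed.

Lemma pik_spec f (k : 'I_(d + 1)) : inbR f -> exists s, pik f k = Some s /\
  forall x : 'I_r, x < K -> s x = f (class_pt k x).
Proof.
move=> Hf; have [s0 Hs0] := class_perm Hf (ltn_ord k).
rewrite /pik; case: pickP => [s /forallP Hs | no_perm].
  by exists s; split=> // x hx; apply/eqP; move/implyP: (Hs x); apply.
have := no_perm s0; move/negbT/negP; case; apply/forallP => x; apply/implyP => hx.
by rewrite Hs0.
Qed.

Lemma class_pt_widen k t j : k < d + 1 -> t < K -> class_pt k t = wid j ->
  k = (j %/ K).
Proof. by move=> hk ht /(congr1 val); rewrite /= class_ptE // => <-; rewrite class_of_pt. Qed.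

Lemma csgn_recolor f j : inbR f -> csgn (recolor f j) = (- csgn f)%R.
Proof.
move=> Hf; have Hf' := recolor_inbR j Hf.
have [hk _ _] := nonapex_class_pt (widen_neq_apex j); set k0 := Ordinal hk.
have free := recolor_free j Hf; set m := recolor f j (wid j) in free.
have fm : f (wid j) != m := free_color_class free (widen_neq_apex j) erefl.
rewrite /csgn (bigD1 k0) // [in RHS](bigD1 k0) //= -mulNr; congr (_ * _)%R.
  have [s [-> Hs]] := pik_spec k0 Hf; have [s' [-> Hs']] := pik_spec k0 Hf'.
  suff -> : s' = (s * tperm (f (wid j)) m)%g.
    by rewrite odd_permM odd_tperm fm addbT signrN.
  apply: perm_eq_below => x hx; rewrite permM Hs // Hs' //.
  have [xj | xj] := eqVneq (class_pt k0 x) (wid j); first by rewrite xj tpermL.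
  have x_apex : class_pt k0 x != z by rewrite class_pt_neq_apex.
  rewrite recolor_other // tpermD //; last first.
    by rewrite eq_sym; apply: free_color_class free x_apex _; rewrite class_ptE ?class_of_pt.
  by rewrite eq_sym inbR_rainbow ?widen_neq_apex //= class_ptE ?class_of_pt.
apply: eq_bigr => k kk0; rewrite /pik; congr (match _ with Some s => _ | None => _ end).
apply: eq_pick => s; apply: eq_forallb => x; case: (ltnP x K) => hx //=.
rewrite -/(class_pt k x) recolor_other //; apply: contra_neq kk0 => /class_pt_widen.
by move=> /(_ (ltn_ord k) hx) kj; apply: val_inj.
Qed.
End Rainbow.

Lemma asbP (P : Prop) : reflect P (asb P).
Proof. by rewrite /asb; case: excluded_middle_informative => ?; constructor. Qed.

Section Cells.
Variables (R : rcfType) (d r : nat) (w : 'I_r -> 'rV[R]_(r - 1)).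
Variable c : 'I_(Ndim d r).+1 -> 'rV[R]_d.
Local Notation N := (Ndim d r).
Local Notation G := 'I_N.+1.
Local Notation z := (@ord_max N).
Local Notation wid := (widen_ord (leqnSn N)).
Local Notation coloring := {ffun G -> 'I_r}.
Local Notation gmat := (gmat w c).
Local Notation Phi := (PhiPt w c).
Implicit Types (f : coloring) (j : 'I_N) (v x : 'rV[R]_N).

Lemma sum_nonapex (V : nmodType) (F : G -> V) :
  \sum_(i : G | i != z) F i = \sum_(i < N) F (wid i).
Proof.
rewrite big_mkcond big_ord_recr /= eqxx addr0; apply: eq_bigr => i _.
by rewrite widen_neq_apex.
Qed.

Lemma row_gmat f i : row i (gmat f) = Phi f (wid i).
Proof. by apply/rowP => k; rewrite !mxE. Qed.

Lemma mul_gmat f v : v *m gmat f = \sum_(i < N) v 0 i *: Phi f (wid i).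
Proof. by rewrite mulmx_sum_row; apply: eq_bigr => i _; rewrite row_gmat. Qed.

Definition extend v (i : G) : R := if unlift z i is Some j then v 0 j else 0.

Lemma extend_widen v j : extend v (wid j) = v 0 j.
Proof.
by rewrite /extend (_ : wid j = lift z j) ?liftK //; apply: val_inj; exact/esym/lift_max.
Qed.

Lemma extend_ge0 v i : (forall j, 0 <= v 0 j) -> 0 <= extend v i.
Proof. by rewrite /extend; case: unlift. Qed.

Hypothesis gp : suff_general_position w c.

Lemma gmat_unit f : inbR f -> gmat f \in unitmx.
Proof.
case: gp => indep no0 Hf; rewrite unitmxE unitfE; apply/negP => /det0P [v v0 vM].
have comb : \sum_(i : G | i != z) extend v i *: Phi f i = 0.
  by rewrite sum_nonapex -[RHS]vM mul_gmat; apply: eq_bigr => j _; rewrite extend_widen.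
set S := \sum_(i : G | i != z) extend v i.
have [S0 | S_neq0] := eqVneq S 0.
  apply/negP: v0; rewrite negbK; apply/eqP/rowP => j; rewrite mxE -extend_widen.
  exact: indep Hf _ S0 comb _ (widen_neq_apex j).
apply: (no0 f Hf z); exists (fun i => S^-1 * extend v i); split.
  by rewrite -mulr_sumr mulVf.
by under eq_bigr => i _ do rewrite -scalerA; rewrite -scaler_sumr comb scaler0.
Qed.

Definition bary f v := v *m invmx (gmat f).

Lemma baryK f v : inbR f -> bary f v *m gmat f = v.
Proof. by move=> Hf; rewrite /bary mulmxKV ?gmat_unit. Qed.

Lemma bary_mul f l : inbR f -> bary f (l *m gmat f) = l.
Proof. by move=> Hf; rewrite /bary mulmxK ?gmat_unit. Qed.

Lemma bary_convex f v : inbR f -> v != 0 -> (forall j, 0 <= bary f v 0 j) ->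
  exists2 t, 0 < t & exists l : G -> R,
    [/\ forall i, 0 <= l i, \sum_(i | i != z) l i = 1,
        t *: v = \sum_(i | i != z) l i *: Phi f i & forall j, l (wid j) = t * bary f v 0 j].
Proof.
move=> Hf v0 bary_ge0; set S := \sum_(j < N) bary f v 0 j.
have S0 : 0 < S.
  rewrite lt_def sumr_ge0 // andbT; apply: contra_neq v0 => /psumr_eq0P S0.
  rewrite -(baryK v Hf) (_ : bary f v = 0) ?mul0mx //; apply/rowP => j.
  by rewrite [RHS]mxE S0.
exists S^-1; first by rewrite invr_gt0.
exists (fun i => S^-1 * extend (bary f v) i); split.
- by move=> i; rewrite mulr_ge0 ?invr_ge0 ?(ltW S0) ?extend_ge0.
- rewrite -mulr_sumr sum_nonapex; under eq_bigr => j _ do rewrite extend_widen.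
  by rewrite mulVf ?gt_eqF.
- rewrite -{1}(baryK v Hf) mul_gmat scaler_sumr sum_nonapex; apply: eq_bigr => j _.
  by rewrite extend_widen scalerA.
- by move=> j; rewrite extend_widen.
Qed.

Lemma ray_meets_bary f v : inbR f -> v != 0 ->
  ray_meets_F w c v f <-> forall j, 0 <= bary f v 0 j.
Proof.
move=> Hf v0; split=> [[t [t0 [l [l0 [l1 tv]]]]] j | bary_ge0]; last first.
  have [t t0 [l [l0 l1 tv _]]] := bary_convex Hf v0 bary_ge0.
  by exists t; split; [exact: ltW | exists l].
pose L := \row_(i < N) l (wid i).
have tL : t *: bary f v = L.
  rewrite -[RHS](bary_mul L Hf) /bary scalemxAl; congr (_ *m _).
  by rewrite mul_gmat tv sum_nonapex; apply: eq_bigr => i _; rewrite mxE.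
have t_pos : 0 < t.
  rewrite lt_def t0 andbT; apply/eqP => t_eq0; move: l1.
  rewrite sum_nonapex (eq_bigr (fun i => L 0 i)) => [|i _]; last by rewrite mxE.
  rewrite -tL t_eq0 scale0r big1 => [/eqP | i _]; last by rewrite mxE.
  by rewrite eq_sym oner_eq0.
have := l0 (wid j); have /rowP/(_ j) := tL; rewrite !mxE => <-.
by rewrite pmulr_rge0.
Qed.

Lemma ray_meets_ridge f v j : inbR f -> v != 0 ->
  (forall k, 0 <= bary f v 0 k) -> bary f v 0 j = 0 ->
  exists2 t, 0 <= t & in_conv (fun i : G => (i != z) && (i != wid j)) (Phi f) (t *: v).
Proof.
move=> Hf v0 bary_ge0 bary_j; have [t t0 [l [l0 l1 tv lE]]] := bary_convex Hf v0 bary_ge0.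
have drop_j (V : nmodType) (F : G -> V) : F (wid j) = 0 ->
    \sum_(i | (i != z) && (i != wid j)) F i = \sum_(i | i != z) F i.
  by move=> Fj; rewrite big_mkcondr; apply: eq_bigr => i _; case: eqVneq => // ->.
have lj : l (wid j) = 0 by rewrite lE bary_j mulr0.
exists t; first exact: ltW.
by exists l; rewrite !drop_j ?lj ?scale0r.
Qed.

Lemma degC_bary v : v != 0 ->
  degC w c v = \sum_(f | inbR f && [forall j, 0 <= bary f v 0 j]) sgnR w c f.
Proof.
move=> v0; apply: eq_bigl => f; case Hf: (inbR f) => //=.
by apply/asbP/forallP => /(ray_meets_bary Hf v0).
Qed.

Lemma row_gmat_recolor f j i : inbR f -> i != j ->
  row i (gmat (recolor f j)) = row i (gmat f).
Proof.
by move=> Hf ij; rewrite !row_gmat /PhiPt recolor_other // (inj_eq (@widen_ord_inj _ _ _)).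
Qed.

Lemma bary_recolor_wall f j x : inbR f -> bary f x 0 j = 0 ->
  bary (recolor f j) x = bary f x.
Proof.
move=> Hf bary_j; set l := bary f x.
suff <- : l *m gmat (recolor f j) = x by rewrite bary_mul ?recolor_inbR.
rewrite -[RHS](baryK x Hf) !mul_gmat; apply: eq_bigr => i _.
have [-> | ij] := eqVneq i j; first by rewrite bary_j !scale0r.
by rewrite -!row_gmat row_gmat_recolor.
Qed.

Lemma det_gmat_neq0 f : inbR f -> \det (gmat f) != 0.
Proof. by move=> Hf; rewrite -unitfE -unitmxE gmat_unit. Qed.

Lemma bary_recolor_scale f j x : inbR f ->
  bary (recolor f j) x 0 j = \det (gmat f) / \det (gmat (recolor f j)) * bary f x 0 j.
Proof.
move=> Hf; have Hf' := recolor_inbR j Hf.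
apply: (mulIf (det_gmat_neq0 Hf')); rewrite cramer_row ?gmat_unit //.
rewrite (row_subst_eq _ (fun i => @row_gmat_recolor f j i Hf)) -cramer_row ?gmat_unit //.
by rewrite mulrAC divfK ?det_gmat_neq0 // mulrC.
Qed.

Lemma sgnR_recolor f j : inbR f ->
  sgnR w c (recolor f j) = - sgz (\det (gmat f) / \det (gmat (recolor f j))) * sgnR w c f.
Proof.
move=> Hf; have sgzV (x : R) : sgz x^-1 = sgz x by rewrite -sgz_sgr sgrV sgz_sgr.
rewrite /sgnR /gsgn csgn_recolor // sgzM sgzV mulrN mulNr mulrACA mulz_sg.
by rewrite det_gmat_neq0 // mul1r.
Qed.

Lemma bary_row f i j : inbR f -> bary f (row i (gmat f)) 0 j = (i == j)%:R.
Proof. by move=> Hf; rewrite /bary -row_mul mulmxV ?gmat_unit // !mxE. Qed.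

Definition coordcol f j : 'cV[R]_N := col j (invmx (gmat f)).

Lemma bary_coordcol f j v : bary f v 0 j = (v *m coordcol f j) 0 0.
Proof. by rewrite /bary /coordcol !mxE; apply: eq_bigr => k _; rewrite mxE. Qed.

Lemma coordcol_neq0 f j : inbR f -> coordcol f j != 0.
Proof.
move=> Hf; apply: contra_neq (@oner_neq0 R) => cj0.
by move: (bary_row j j Hf); rewrite eqxx bary_coordcol cj0 mulmx0 mxE.
Qed.

(* Avoiding these functionals at u forbids two coordinates of a cell from
   vanishing at the same interior point of the segment from a to u. *)
Definition pair_col a f j k : 'cV[R]_N :=
  bary f a 0 k *: coordcol f j - bary f a 0 j *: coordcol f k.

Lemma mul_pair_col v a f j k : (v *m pair_col a f j k) 0 0 =
  bary f a 0 k * bary f v 0 j - bary f a 0 j * bary f v 0 k.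
Proof.
rewrite mulmxBr -!scalemxAr !bary_coordcol.
move: (v *m coordcol f j) (v *m coordcol f k) (a *m coordcol f j) (a *m coordcol f k).
by move=> X Y Z W; rewrite !mxE.
Qed.

Lemma pair_col_neq0 a f j k : inbR f -> j != k ->
  (bary f a 0 j != 0) || (bary f a 0 k != 0) -> pair_col a f j k != 0.
Proof.
move=> Hf jk; apply: contraTneq => pair0.
have kj : (k == j) = false by rewrite eq_sym (negbTE jk).
have := @mul_pair_col (row j (gmat f)) a f j k; have := @mul_pair_col (row k (gmat f)) a f j k.
have entry0 : (0 : 'M[R]_1) 0 0 = 0 by rewrite mxE.
rewrite pair0 !mulmx0 entry0 !bary_row // !eqxx kj (negbTE jk) !mulr0 !mulr1 sub0r subr0.
by move=> /eqP; rewrite eq_sym oppr_eq0 => /eqP -> <-; rewrite eqxx.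
Qed.

Section Path.
Variables a u : 'rV[R]_N.
Hypotheses (a0 : a != 0) (a_generic : generic_ray w c a).
Hypothesis u_coord : forall f j, inbR f -> bary f u 0 j != 0.
Hypothesis u_pair : forall f j k, pair_col a f j k != 0 ->
  (u *m pair_col a f j k) 0 0 != 0.

Let A f j := bary f a 0 j.
Let B f j := bary f u 0 j - bary f a 0 j.

Lemma cell_coord_path f j s : cell_coord A B f j s = bary f (a + s *: (u - a)) 0 j.
Proof.
have -> : bary f (a + s *: (u - a)) = bary f a + s *: (bary f u - bary f a).
  by rewrite /bary mulmxDl -scalemxAl mulmxBl.
by rewrite /cell_coord /A /B; move: (bary f a) (bary f u) => X Y; rewrite !mxE.
Qed.

Lemma path_simple_walls s f j k : 0 < s < 1 -> inbR f ->
  cell_coord A B f j s = 0 -> cell_coord A B f k s = 0 -> j = k.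
Proof.
move=> /andP [s0 s1] Hf cj ck; apply/eqP; apply: contraTT isT => jk.
have [a_jk | a_jk0] := boolP ((bary f a 0 j != 0) || (bary f a 0 k != 0)).
  have := u_pair (pair_col_neq0 Hf jk a_jk); rewrite mul_pair_col.
  suff -> : bary f a 0 k * bary f u 0 j - bary f a 0 j * bary f u 0 k = 0 by rewrite eqxx.
  apply: (mulfI (negbT (gt_eqF s0))); rewrite mulr0.
  transitivity (bary f a 0 k * cell_coord A B f j s - bary f a 0 j * cell_coord A B f k s).
    by rewrite /cell_coord /A /B; ring.
  by rewrite cj ck !mulr0 subrr.
move: a_jk0 cj; rewrite negb_or !negbK => /andP [/eqP aj _].
rewrite /cell_coord /A /B aj subr0 add0r => /eqP; rewrite mulf_eq0 (gt_eqF s0) /=.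
by rewrite (negbTE (u_coord j Hf)).
Qed.

Lemma path_off_boundary0 : off_boundary (@inbR d r) A B 0.
Proof.
move=> f j Hf _; rewrite cell_coord_path scale0r addr0 => aj.
case: (pickP (fun k => bary f a 0 k < 0)) => [k neg_k | no_neg].
  by exists k; rewrite cell_coord_path scale0r addr0.
have a_ge0 k : 0 <= bary f a 0 k by rewrite leNgt no_neg.
have [t t0 in_ridge] := ray_meets_ridge Hf a0 a_ge0 aj.
by case: (a_generic Hf (widen_neq_apex j) t0).
Qed.

Lemma path_off_boundary1 : off_boundary (@inbR d r) A B 1.
Proof.
move=> f j Hf _; rewrite cell_coord_path scale1r addrC subrK => uj.
by case/eqP: (u_coord j Hf).
Qed.

Lemma degC_path : degC w c a =
  \sum_(f | inbR f && [forall j, 0 <= bary f u 0 j]) sgnR w c f.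
Proof.
have count_path s : signed_count (@inbR d r) (sgnR w c) A B s =
    \sum_(f | inbR f && [forall j, 0 <= bary f (a + s *: (u - a)) 0 j]) sgnR w c f.
  by apply: eq_bigl => f; congr (_ && _); apply: eq_forallb => j; rewrite cell_coord_path.
rewrite degC_bary //; have := count_path 0; have := count_path 1.
rewrite scale0r addr0 scale1r addrC subrK => <- <-.
apply: (signed_count_segment (sw := @recolor d r)) path_simple_walls
  path_off_boundary0 path_off_boundary1.
- exact: recolor_inbR.
- exact: recolorK.
- move=> f j s Hf; rewrite !cell_coord_path => path_j k.
  by rewrite !cell_coord_path bary_recolor_wall.
- move=> f j Hf; exists (\det (gmat f) / \det (gmat (recolor f j))); split.
  + by rewrite mulf_neq0 ?invr_eq0 ?det_gmat_neq0 ?recolor_inbR.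
  + by move=> s; rewrite !cell_coord_path bary_recolor_scale.
  + exact: sgnR_recolor.
Qed.
End Path.
End Cells.

Theorem lemma9 (R : rcfType) (d r : nat) (w : 'I_r -> 'rV[R]_(r - 1))
  (c : 'I_(Ndim d r).+1 -> 'rV[R]_d) (psi nu : 'rV[R]_(Ndim d r)) :
  regular_simplex0 w ->
  injective c ->
  suff_general_position w c ->
  psi != 0 -> nu != 0 ->
  generic_ray w c psi -> generic_ray w c nu ->
  degC w c psi = degC w c nu.
Proof.
move=> _ _ gp psi0 nu0 psi_gen nu_gen.
pose I := ({ffun 'I_(Ndim d r).+1 -> 'I_r} * 'I_(Ndim d r) +
  {ffun 'I_(Ndim d r).+1 -> 'I_r} * 'I_(Ndim d r) * 'I_(Ndim d r) * bool)%type.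
pose b (x : I) := match x with
  | inl (f, j) => coordcol w c f j
  | inr (f, j, k, e) => pair_col w c (if e then psi else nu) f j k end.
have [u u_avoid] := exists_row_avoiding b.
have u_coord f j : inbR f -> bary w c f u 0 j != 0.
  by move=> Hf; rewrite bary_coordcol (u_avoid (inl (f, j))) ?coordcol_neq0.
have u_pair e f j k := u_avoid (inr (f, j, k, e)).
by rewrite (degC_path gp psi0 psi_gen u_coord (u_pair true))
  (degC_path gp nu0 nu_gen u_coord (u_pair false)).
Qed.
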